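(* Let $k\ge2$. There exists an integer $m$ and a bipartite construction $B$ on $m$ vertices which contains a $K_k$-factor with at least $\lambda_k m$ red edges as well as a $K_k$-factor with at least $\lambda_k m$ blue edges.
   Context: A $K_k$-factor of $K_n$ ($k\mid n$) is a collection of $n/k$ vertex-disjoint copies of $K_k$ covering all vertices. The bipartite construction with ratio $\rho\in[0,1]$ is the red/blue-coloring of $K_n$ obtained by partitioning $V(K_n)=X\cup Y$ with $|X|=\rho n$, coloring all edges touching $X$ with one color and all edges inside $Y$ with the other; a bipartite construction is one with some ratio $\rho$. For $k\ge2$, $\lambda_k$ is the supremum of all $\lambda$ such that for every $n$ divisible by $k$ and every $\rho\in[0,1]$, the $n$-vertex bipartite construction with ratio $\rho$ has a $K_k$-factor with at least $\lambda n$ edges of the same color. *)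

From mathcomp Require Import all_boot all_order all_algebra.
From mathcomp Require Import boolp reals.
From mathcomp Require classical_sets.
Set Implicit Arguments. Unset Strict Implicit. Unset Printing Implicit Defensive.
Import Order.TTheory GRing.Theory Num.Theory.

(* A bipartite construction is given by the part X (Y = complement of X):
   an edge touching X is red, an edge inside Y is blue.
   (|X| = rho n ranges over all sizes 0..n as rho ranges over [0,1].) *)

Definition is_edge (n : nat) (e : {set 'I_n}) : bool := #|e| == 2.

Definition red_edge (n : nat) (X e : {set 'I_n}) : bool :=
  is_edge e && (e :&: X != finset.set0).

Definition blue_edge (n : nat) (X e : {set 'I_n}) : bool :=
  is_edge e && (e \subset setC X).

Definition is_Kfactor (n k : nat) (F : {set {set 'I_n}}) : bool :=
  partition F [set: 'I_n] && [forall B in F, #|B| == k].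

Definition factor_edges (n : nat) (F : {set {set 'I_n}}) : {set {set 'I_n}} :=
  [set e : {set 'I_n} | is_edge e && [exists B in F, e \subset B]].

Definition n_red (n : nat) (X : {set 'I_n}) (F : {set {set 'I_n}}) : nat :=
  #|[set e in factor_edges F | red_edge X e]|.

Definition n_blue (n : nat) (X : {set 'I_n}) (F : {set {set 'I_n}}) : nat :=
  #|[set e in factor_edges F | blue_edge X e]|.

Local Open Scope ring_scope.

Definition lambda_set (R : realType) (k : nat) : classical_sets.set R :=
  fun l => forall n : nat, (k %| n)%N -> forall X : {set 'I_n},
    exists F : {set {set 'I_n}}, is_Kfactor k F /\
      (l * n%:R <= (n_red X F)%:R \/ l * n%:R <= (n_blue X F)%:R).

Definition lambda_k (R : realType) (k : nat) : R := sup (@lambda_set R k).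

(* A block of a K_k-factor meeting the blue part Y = ~: X in c vertices carries
   'C(c, 2) blue edges, and c |-> 'C(c, 2) is convex: it lies below its chord on
   [0, k] and above its chord on each [s, s + 1].  Hence n_blue <= |Y| (k - 1) / 2,
   with equality when every block lies inside Y or misses it, while
   n_red = #|F| 'C(k, 2) - n_blue is largest when every block meets Y in s or s + 1
   vertices.  With q = k (2s + k - 1) blocks and |Y| = k t, t = k (k - 1) + s (s + 1),
   both maxima equal t 'C(k, 2), because q - 2sk = k (k - 1); the balance condition
   s q <= |Y| <= (s + 1) q holds for the largest s with s q <= k t.  An aligned and an
   interleaved K_k-factor attain the two maxima, and every admissible lambda, hence
   lambda_k itself, is at most t 'C(k, 2) / (q k). *)

From mathcomp Require Import all_boot all_order all_algebra.
From mathcomp Require Import boolp reals.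
From mathcomp Require classical_sets.
From mathcomp Require Import zify.
Import Order.TTheory GRing.Theory Num.Theory.
Set Implicit Arguments. Unset Strict Implicit.

Section FactorEdges.
Variables (n : nat) (F : {set {set 'I_n}}).
Hypothesis tiF : trivIset F.

Lemma sum_subset_blocks (e : {set 'I_n}) : e != set0 ->
  \sum_(B in F) (e \subset B) = [exists B in F, e \subset B].
Proof.
move=> /set0Pn[x ex].
have [/exists_inP[B0 B0F eB0]|/exists_inP noB] := boolP [exists B in F, e \subset B].
  rewrite (bigD1 B0) //= eB0 big1 // => B /andP[BF neqB].
  apply/eqP; rewrite eqb0; apply/negP => eB; have /trivIsetP/(_ B B0 BF B0F neqB) := tiF.
  by move/disjointFr/(_ (subsetP eB x ex)); rewrite (subsetP eB0 x ex).
by rewrite big1 // => B BF; apply/eqP; rewrite eqb0; apply/negP => eB; apply: noB; exists B.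
Qed.

Lemma card_factor_edges_cond (P : pred {set 'I_n}) :
  #|[set e in factor_edges F | P e]| =
  \sum_(B in F) #|[set e : {set 'I_n} | is_edge e && (e \subset B) && P e]|.
Proof.
rewrite -sum1_card.
under [RHS]eq_bigr do rewrite -sum1_card big_mkcond /=.
rewrite exchange_big big_mkcond /=; apply: eq_bigr => e _.
rewrite !inE andbAC; have [/andP[ee Pe]|notPe] /= := boolP (is_edge e && P e).
  have e0 : e != set0 by apply: contraTneq ee => ->; rewrite /is_edge cards0.
  rewrite -[LHS]/(nat_of_bool _) -(sum_subset_blocks e0).
  by apply: eq_bigr => B _; rewrite inE ee Pe andbT.
by rewrite big1 // => B _; rewrite inE andbAC (negbTE notPe).
Qed.

Lemma card_factor_edges : #|factor_edges F| = \sum_(B in F) 'C(#|B|, 2).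
Proof.
rewrite -[factor_edges F]setIT -[_ :&: _]setIdE card_factor_edges_cond.
apply: eq_bigr => B _; rewrite -cards_draws; apply: eq_card => e.
by rewrite !inE andbT andbC.
Qed.

Lemma n_blueE (X : {set 'I_n}) : n_blue X F = \sum_(B in F) 'C(#|B :&: ~: X|, 2).
Proof.
rewrite /n_blue card_factor_edges_cond; apply: eq_bigr => B _.
rewrite -cards_draws; apply: eq_card => e.
by rewrite !inE /blue_edge /is_edge subsetI; case: (#|e| == 2); rewrite ?andbF ?andbT.
Qed.

End FactorEdges.

Lemma n_red_add_n_blue n (X : {set 'I_n}) (F : {set {set 'I_n}}) :
  n_red X F + n_blue X F = #|factor_edges F|.
Proof.
rewrite /n_red /n_blue -(cardsID [set e | blue_edge X e] (factor_edges F)) addnC.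
congr (_ + _); apply: eq_card => e; rewrite !inE.
  by rewrite andbC.
rewrite /red_edge /blue_edge setI_eq0 disjoints_subset.
by case: (is_edge e); rewrite //= andbC.
Qed.

Lemma bin2_mul2 c : 'C(c, 2) * 2 = c * c.-1.
Proof. by rewrite mulnC -mul_bin_diag bin1. Qed.

Lemma bin2_leqif_chord_ub c k : c <= k ->
  'C(c, 2) * 2 <= c * k.-1 ?= iff (c == 0) || (c == k).
Proof.
move=> ck; rewrite bin2_mul2; split; first by rewrite leq_mul2l -!subn1 leq_sub2r ?orbT.
by rewrite eqn_mul2l; case: c ck => //= c; case: k.
Qed.

Lemma bin2_leqif_chord_lb c s :
  s * c * 2 <= 'C(c, 2) * 2 + s * s.+1 ?= iff (s <= c <= s.+1).
Proof.
rewrite bin2_mul2; split; first by case: c => [|c]; [nia | case: (leqP s c); nia].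
apply/eqP/idP => [|/andP[]]; last by case: c => [|c]; nia.
by case: c => [|c] eq_c; apply/andP; split; nia.
Qed.

Section KFactor.
Variables (n k : nat) (F : {set {set 'I_n}}).
Hypothesis KF : is_Kfactor k F.

Let partF : partition F [set: 'I_n]. Proof. by case/andP: KF. Qed.

Let card_block : {in F, forall B : {set 'I_n}, #|B| = k}.
Proof. by case/andP: KF => _ /forall_inP cardF B /cardF/eqP. Qed.

Lemma Kfactor_card : #|F| * k = n.
Proof. by rewrite -(card_uniform_partition card_block partF) cardsT card_ord. Qed.

Lemma Kfactor_edges : #|factor_edges F| = #|F| * 'C(k, 2).
Proof.
rewrite card_factor_edges ?(partition_trivIset partF) // -sum_nat_const.
by apply: eq_bigr => B /card_block ->.
Qed.

Lemma sum_card_blocksI (A : {set 'I_n}) : \sum_(B in F) #|B :&: A| = #|A|.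
Proof.
rewrite -sum1_card (eq_bigl [pred x in [set: 'I_n] | x \in A]) => [|x]; last by rewrite !inE.
rewrite (set_partition_big_cond _ partF).
by apply: eq_bigr => B _; rewrite -sum1_card; apply: eq_bigl => x; rewrite inE.
Qed.

Lemma n_blue_leqif_chord_ub (X : {set 'I_n}) :
  n_blue X F * 2 <= #|~: X| * k.-1
    ?= iff [forall (B | B \in F), (#|B :&: ~: X| == 0) || (#|B :&: ~: X| == k)].
Proof.
rewrite n_blueE ?(partition_trivIset partF) // -sum_card_blocksI !big_distrl /=.
apply: leqif_sum => B BF; apply: bin2_leqif_chord_ub.
by rewrite -(card_block BF) subset_leq_card ?subsetIl.
Qed.

Lemma n_blue_leqif_chord_lb (X : {set 'I_n}) s :
  s * #|~: X| * 2 <= n_blue X F * 2 + #|F| * (s * s.+1)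
    ?= iff [forall (B | B \in F), s <= #|B :&: ~: X| <= s.+1].
Proof.
rewrite n_blueE ?(partition_trivIset partF) // -sum_card_blocksI.
rewrite big_distrr !big_distrl -sum_nat_const -big_split /=.
by apply: leqif_sum => B _; apply: bin2_leqif_chord_lb.
Qed.

End KFactor.

Lemma mixed_radix_subproof a b (x : 'I_a) (y : 'I_b) : x + a * y < a * b.
Proof. by have := ltn_ord x; have := ltn_ord y; nia. Qed.

Definition mixed_radix a b (x : 'I_a) (y : 'I_b) : 'I_(a * b) :=
  Ordinal (mixed_radix_subproof x y).

Lemma mixed_radix_inj a b : injective (uncurry (@mixed_radix a b)).
Proof.
move=> [x y] [x' y'] /(congr1 val) /= eq_xy.
have eq_y : y = y' :> nat by move: (ltn_ord x) (ltn_ord x'); case: (ltngtP y y'); nia.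
by congr (_, _); apply: val_inj => //=; move: eq_xy; rewrite eq_y => /addIn.
Qed.

Lemma card_ord_lt a k : a <= k -> #|[set j : 'I_k | j < a]| = a.
Proof.
move=> le_ak; rewrite -sum1dep_card -(big_ord_widen _ (fun=> 1) le_ak).
by rewrite sum1_card card_ord.
Qed.

Definition grid_factor n q k (g : 'I_q -> 'I_k -> 'I_n) : {set {set 'I_n}} :=
  [set [set g i j | j : 'I_k] | i : 'I_q].

Lemma grid_row_inj n q k (g : 'I_q -> 'I_k -> 'I_n) i :
  injective (uncurry g) -> injective (g i).
Proof. by move=> inj_g j j' /(@inj_g (i, j) (i, j')) []. Qed.

Lemma card_grid_row n q k (g : 'I_q -> 'I_k -> 'I_n) i :
  injective (uncurry g) -> #|[set g i j | j : 'I_k]| = k.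
Proof. by move=> /grid_row_inj inj_g; rewrite card_imset ?card_ord. Qed.

Lemma grid_factor_Kfactor n q k (g : 'I_q -> 'I_k -> 'I_n) :
  0 < k -> n <= q * k -> injective (uncurry g) -> is_Kfactor k (grid_factor g).
Proof.
move=> k_gt0 le_n inj_g.
have card_row i : #|[set g i j | j : 'I_k]| = k by rewrite card_grid_row.
have rows_neq0 : set0 \notin grid_factor g.
  apply/imsetP => -[i _ row0]; move: (card_row i).
  by rewrite -row0 cards0 => k0; rewrite -k0 in k_gt0.
have disjoint_rows i i' :
    i' != i -> [disjoint [set g i j | j : 'I_k] & [set g i' j | j : 'I_k]].
  move=> neq_i; rewrite disjoints_subset; apply/subsetP => _ /imsetP[j _ ->]; rewrite inE.
  by apply/imsetP => -[j' _ /(@inj_g (i, j) (i', j')) [eq_i _]]; rewrite eq_i eqxx in neq_i.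
have [tiF _] := trivIimset (in2W disjoint_rows) rows_neq0.
have cover_grid : cover (grid_factor g) = [set: 'I_n].
  apply/setP => v; rewrite cover_imset inE.
  have /codomP[[i j] ->] : v \in codom (uncurry g).
    by apply: inj_card_onto; rewrite // card_prod !card_ord.
  by apply/bigcupP; exists i => //; apply: imset_f.
rewrite /is_Kfactor /partition cover_grid eqxx tiF rows_neq0 /=.
by apply/forall_inP => _ /imsetP[i _ ->]; rewrite card_row.
Qed.

Definition tail_set m N : {set 'I_m} := [set v : 'I_m | N <= v].

Lemma setC_tail_set m N : ~: tail_set m N = [set v : 'I_m | v < N].
Proof. by apply/setP => v; rewrite !inE -ltnNge. Qed.

Definition nblocks k s := k * (2 * s + k.-1).
Definition nblue_blocks k s := k * k.-1 + s * s.+1.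

Lemma balance_lt k s : 1 < k -> s * nblocks k s <= k * nblue_blocks k s -> s < k.
Proof. by rewrite /nblocks /nblue_blocks ltnNge => k_gt1 le_s; apply/negP => le_ks; nia. Qed.

Lemma exists_balance_index k : 1 < k ->
  exists s, s * nblocks k s <= k * nblue_blocks k s <= s.+1 * nblocks k s.
Proof.
move=> k_gt1; pose P s := s * nblocks k s <= k * nblue_blocks k s.
have [s Ps maxs] := ex_maxnP (ex_intro P 0 isT) (fun s Ps => ltnW (@balance_lt k s k_gt1 Ps)).
have notPs1 : ~~ P s.+1 by apply/negP => /maxs; rewrite ltnn.
exists s; rewrite [_ <= _]Ps /=; move: notPs1.
by rewrite /P /nblocks /nblue_blocks -ltnNge; nia.
Qed.

Section BalancedConstruction.
Variables (k s : nat).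
Local Notation q := (nblocks k s).
Local Notation t := (nblue_blocks k s).
Hypotheses (k_gt1 : 1 < k) (s_lo : s * q <= k * t) (s_hi : k * t <= s.+1 * q).

Local Notation X := (tail_set (q * k) (k * t)).

Definition aligned_vertex (i : 'I_q) (j : 'I_k) : 'I_(q * k) :=
  cast_ord (mulnC k q) (mixed_radix j i).

Definition aligned_factor : {set {set 'I_(q * k)}} := grid_factor aligned_vertex.

Definition interleaved_factor : {set {set 'I_(q * k)}} := grid_factor (@mixed_radix q k).

Let s_lt_k : s < k. Proof. exact: balance_lt. Qed.

Let card_Y : #|~: X| = k * t.
Proof.
by rewrite setC_tail_set card_ord_lt // (leq_trans s_hi) // mulnC leq_mul2l s_lt_k orbT.
Qed.

Let aligned_inj : injective (uncurry aligned_vertex).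
Proof.
move=> [i j] [i' j'] /cast_ord_inj.
by move/(@mixed_radix_inj k q (j, i) (j', i')) => -[-> ->].
Qed.

Lemma aligned_Kfactor : is_Kfactor k aligned_factor.
Proof. by apply: grid_factor_Kfactor aligned_inj => //; apply: ltnW. Qed.

Lemma interleaved_Kfactor : is_Kfactor k interleaved_factor.
Proof. by apply: grid_factor_Kfactor (@mixed_radix_inj q k) => //; apply: ltnW. Qed.

Let Kfactor_nblocks (F : {set {set 'I_(q * k)}}) : is_Kfactor k F -> #|F| = q.
Proof. by move=> KF; apply/eqP; rewrite -(eqn_pmul2r (ltnW k_gt1)) Kfactor_card. Qed.

Lemma Kfactor_n_blue_le F : is_Kfactor k F -> n_blue X F <= t * 'C(k, 2).
Proof.
move=> KF; have [le_blue _] := n_blue_leqif_chord_ub KF X.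
rewrite -(leq_pmul2r (isT : 0 < 2)) -mulnA bin2_mul2.
by apply: leq_trans le_blue _; rewrite card_Y; nia.
Qed.

Lemma Kfactor_n_red_le F : is_Kfactor k F -> n_red X F <= t * 'C(k, 2).
Proof.
move=> KF; have [le_blue _] := n_blue_leqif_chord_lb KF X s.
have red_blue := n_red_add_n_blue X F.
rewrite (Kfactor_edges KF) (Kfactor_nblocks KF) in red_blue.
rewrite card_Y (Kfactor_nblocks KF) in le_blue.
have C2 := bin2_mul2 k; rewrite /nblocks /nblue_blocks in le_blue red_blue *; nia.
Qed.

Lemma aligned_blocks_inside_or_outside :
  [forall (B | B \in aligned_factor), (#|B :&: ~: X| == 0) || (#|B :&: ~: X| == k)].
Proof.
apply/forall_inP => _ /imsetP[i _ ->]; set B := [set _ | _ : 'I_k].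
have [lt_it|le_ti] := ltnP i t.
  have sub_B : B \subset ~: X.
    apply/subsetP => _ /imsetP[j _ ->].
    by rewrite setC_tail_set inE /=; have := ltn_ord j; nia.
  by rewrite (setIidPl sub_B) card_grid_row ?eqxx ?orbT.
apply/orP; left; rewrite cards_eq0 setI_eq0 disjoints_subset setCK.
by apply/subsetP => _ /imsetP[j _ ->]; rewrite inE /=; nia.
Qed.

Lemma interleaved_blocks_balanced :
  [forall (B | B \in interleaved_factor), s <= #|B :&: ~: X| <= s.+1].
Proof.
apply/forall_inP => _ /imsetP[i _ ->].
have card_row_lt a :
    a <= k -> #|[set mixed_radix i j | j in [set j : 'I_k | j < a]]| = a.
  move=> le_ak; rewrite card_imset ?card_ord_lt //.
  exact: grid_row_inj (@mixed_radix_inj q k).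
apply/andP; split.
  rewrite -{1}(card_row_lt s (ltnW s_lt_k)); apply: subset_leq_card.
  apply/subsetP => _ /imsetP[j /[!inE] lt_js ->].
  by rewrite imset_f //= -ltnNge; have := ltn_ord i; nia.
rewrite -(card_row_lt s.+1 s_lt_k); apply: subset_leq_card.
apply/subsetP => _ /setIP[/imsetP[j _ ->]]; rewrite setC_tail_set inE /= => lt_v.
by apply: imset_f; rewrite inE; nia.
Qed.

Lemma n_blue_aligned : n_blue X aligned_factor = t * 'C(k, 2).
Proof.
have [_] := n_blue_leqif_chord_ub aligned_Kfactor X.
rewrite aligned_blocks_inside_or_outside card_Y => /eqP eq_blue.
have C2 := bin2_mul2 k; nia.
Qed.

Lemma n_red_interleaved : n_red X interleaved_factor = t * 'C(k, 2).
Proof.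
have [_] := n_blue_leqif_chord_lb interleaved_Kfactor X s.
have red_blue := n_red_add_n_blue X interleaved_factor.
have cardF := Kfactor_nblocks interleaved_Kfactor.
rewrite (Kfactor_edges interleaved_Kfactor) cardF in red_blue.
rewrite interleaved_blocks_balanced card_Y cardF => /eqP eq_blue.
have C2 := bin2_mul2 k; rewrite /nblocks /nblue_blocks in red_blue eq_blue *; nia.
Qed.

End BalancedConstruction.

Local Open Scope ring_scope.

Lemma lambda_k_le (R : realType) k n (X : {set 'I_n}) (V : nat) :
  (0 < n)%N -> (k %| n)%N ->
  (forall F, is_Kfactor k F -> n_red X F <= V /\ n_blue X F <= V)%N ->
  @lambda_k R k * n%:R <= V%:R.
Proof.
move=> n_gt0 kn maxV; rewrite -ler_pdivlMr ?ltr0n //.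
have ubV : classical_sets.ubound (@lambda_set R k) (V%:R / n%:R).
  move=> l /(_ n kn X) [F [KF le_l]]; rewrite ler_pdivlMr ?ltr0n //.
  have [redV blueV] := maxV F KF.
  by case: le_l => /le_trans; apply; rewrite ler_nat.
have [ne|empty] := pselect (classical_sets.nonempty (@lambda_set R k)).
  exact: ge_sup.
by rewrite /lambda_k sup_out ?divr_ge0 // => -[].
Qed.

Unset Implicit Arguments.

Theorem lemma3p5 (R : realType) (k : nat) : (2 <= k)%N ->
  exists m : nat, (0 < m)%N /\ exists X : {set 'I_m},
    (exists F : {set {set 'I_m}}, is_Kfactor k F /\
        @lambda_k R k * m%:R <= (n_red X F)%:R) /\
    (exists F : {set {set 'I_m}}, is_Kfactor k F /\
        @lambda_k R k * m%:R <= (n_blue X F)%:R).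
Proof.
move=> k_gt1; have [s /andP[s_lo s_hi]] := exists_balance_index k_gt1.
have m_gt0 : (0 < nblocks k s * k)%N by rewrite /nblocks; nia.
have lambda_le := @lambda_k_le R k _ _ _ m_gt0 (dvdn_mull _ (dvdnn k))
  (fun F KF => conj (Kfactor_n_red_le k_gt1 s_lo s_hi KF)
                    (Kfactor_n_blue_le k_gt1 s_lo s_hi KF)).
exists (nblocks k s * k)%N; split => //; exists (tail_set _ (k * nblue_blocks k s)); split.
  exists (interleaved_factor k s); split; first exact: interleaved_Kfactor.
  by rewrite (n_red_interleaved k_gt1 s_lo s_hi).
exists (aligned_factor k s); split; first exact: aligned_Kfactor.
by rewrite (n_blue_aligned k_gt1 s_lo s_hi).
Qed.
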